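(* Let $n\in\mathbb{N}$ and let $c_n$ be the entire function $c_n(\eta)=\sum_{l=0}^\infty c(n;l)\eta^{2nl}$, where $$c(n;l)=\frac{(-1)^l n}{(2n)^{2l+\frac{1}{2n}}\,\Gamma\!\left(l+\frac{1}{2n}\right)\,l!}.$$ Then for every $\omega\in\mathbb{R}$, $$e^{-\frac{\omega^{2n}}{2n}}=\int_{-\infty}^{\infty}c_n(\omega t)\,e^{-\frac{t^{2n}}{2n}}\,dt=\int_{-\infty}^{\infty}\sum_{l=0}^\infty c(n;l)(\omega t)^{2nl}e^{-\frac{t^{2n}}{2n}}\,dt.$$ *)

From Stdlib Require Import Reals Arith.
From Coquelicot Require Import Coquelicot.
Open Scope R_scope.

Definition Gamma (s : R) : R :=
  RInt_gen (fun t => Rpower t (s - 1) * exp (- t)) (at_right 0) (Rbar_locally p_infty).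

Definition coef (n l : nat) : R :=
  (-1) ^ l * INR n /
  (Rpower (2 * INR n) (2 * INR l + / (2 * INR n))
   * Gamma (INR l + / (2 * INR n)) * INR (Factorial.fact l)).

Definition cfun (n : nat) (eta : R) : R :=
  Series (fun l => coef n l * eta ^ (2 * n * l)).

(* Expanding c_n(omega t) and integrating term by term, the l-th term contributes
   c(n;l) omega^(2nl) times the moment M_l = int_R t^(2nl) exp(-t^(2n)/(2n)) dt.  The
   substitution u = t^(2n)/(2n) gives M_l = 2 (2n)^(s-1) Gamma(s) with s = l + 1/(2n), so the
   Gamma factors cancel and the l-th term is (-omega^(2n)/(2n))^l / l!: the terms add up to
   the exponential series of exp(-omega^(2n)/(2n)).
   Summation and integration may be exchanged because sum_l |c(n;l)| omega^(2nl) M_l is the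
   convergent series of exp(omega^(2n)/(2n)), and because on every compact interval the
   series converges normally: the moments are bounded below by exp(-2^(2n)/(2n)), so the
   coefficients |c(n;l)| are dominated by an exponential series as well.
   Since Gamma is only given as an improper integral, M_l/2 is first obtained as the supremum
   of the nondecreasing bounded partial integrals over [0, y], and then matched with Gamma by
   the substitution. *)

From Stdlib Require Import Reals Lra Lia Classical.
From Coquelicot Require Import Coquelicot.
Open Scope R_scope.

Lemma INR_fact_pos (k : nat) : 0 < INR (Factorial.fact k).
Proof. apply lt_0_INR, Factorial.lt_O_fact. Qed.

Lemma is_series_exp (y : R) :
  is_series (fun k => y ^ k / INR (Factorial.fact k)) (exp y).
Proof.
  eapply is_series_ext; [|exact (is_exp_Reals y)].
  intros k. rewrite pow_n_pow. reflexivity.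
Qed.

Lemma pow_le_fact_mul_exp (y : R) (j : nat) :
  0 <= y -> y ^ j <= INR (Factorial.fact j) * exp y.
Proof.
  intros Hy.
  assert (Hterm : y ^ j / INR (Factorial.fact j) <= exp y).
  { eapply Rle_trans; [|apply (exp_ge_taylor y j Hy)].
    destruct j as [|j]; simpl; [lra|].
    assert (0 <= sum_f_R0 (fun k => y ^ k / INR (Factorial.fact k)) j); [|lra].
    apply cond_pos_sum. intros k. apply Rdiv_le_0_compat.
    - apply pow_le, Hy.
    - apply INR_fact_pos. }
  pose proof (INR_fact_pos j).
  replace (y ^ j) with (INR (Factorial.fact j) * (y ^ j / INR (Factorial.fact j)))
    by (field; lra).
  apply Rmult_le_compat_l; lra.
Qed.

Lemma Series_tail_le (u w : nat -> R) (N : nat) :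
  (forall k, Rabs (u k) <= w k) -> ex_series w ->
  Rabs (Series u - sum_f_R0 u N) <= Series w - sum_f_R0 w N.
Proof.
  intros Huw Hw.
  assert (Hu : ex_series u) by (apply (ex_series_le u w); auto).
  apply (sum_maj1 (fun k _ => u k) w 0); auto;
    apply is_series_Reals, Series_correct; auto.
Qed.

Lemma Series_tail_lt (w : nat -> R) (eps : R) :
  ex_series w -> 0 < eps ->
  exists N0, forall N, (N0 <= N)%nat -> Rabs (Series w - sum_f_R0 w N) < eps.
Proof.
  intros Hw Heps.
  destruct (proj1 (is_series_Reals _ _) (Series_correct w Hw) eps Heps) as [N0 HN0].
  exists N0. intros N HN. rewrite Rabs_minus_sym. exact (HN0 N HN).
Qed.

Lemma sum_f_R0_le_Series (w : nat -> R) (N : nat) :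
  (forall k, 0 <= w k) -> ex_series w -> sum_f_R0 w N <= Series w.
Proof.
  intros Hw Hex. apply sum_incr; auto.
  apply is_series_Reals, Series_correct, Hex.
Qed.

Lemma sum_f_R0_split_le (Q v : nat -> R) (N0 N : nat) : (N0 <= N)%nat ->
  (forall k, (N0 < k)%nat -> Q k <= v k) ->
  sum_f_R0 Q N <= sum_f_R0 Q N0 + (sum_f_R0 v N - sum_f_R0 v N0).
Proof.
  intros HN HQv. induction HN as [|m HN IH]; [lra|].
  simpl. specialize (HQv (S m) ltac:(lia)). lra.
Qed.

Lemma pow_even_nonneg (t : R) (k : nat) : 0 <= t ^ (2 * k).
Proof. rewrite pow_mult. apply pow_le, pow2_ge_0. Qed.

Lemma pow_even_opp (t : R) (k : nat) : (- t) ^ (2 * k) = t ^ (2 * k).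
Proof. rewrite !pow_mult. f_equal. ring. Qed.

Lemma pow_even_le (s t : R) (k : nat) : Rabs s <= Rabs t -> s ^ (2 * k) <= t ^ (2 * k).
Proof.
  intros Hst. rewrite !pow_mult, <- (pow2_abs s), <- (pow2_abs t).
  pose proof (Rabs_pos s). apply pow_incr. nra.
Qed.

Lemma exp_le_compat (x y : R) : x <= y -> exp x <= exp y.
Proof. intros [Hlt|Heq]; [left; apply exp_increasing, Hlt|right; rewrite Heq; reflexivity]. Qed.

Lemma is_RInt_inv_succ_sq (y : R) :
  0 <= y -> is_RInt (fun t => / (1 + t) ^ 2) 0 y (1 - / (1 + y)).
Proof.
  intros Hy.
  replace (1 - / (1 + y)) with (minus (- / (1 + y)) (- / (1 + 0)))
    by (unfold minus, plus, opp; simpl; field; lra).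
  apply (is_RInt_derive (V:=R_CompleteNormedModule) (fun t => - / (1 + t))).
  - intros t Ht. rewrite Rmin_left in Ht by lra. auto_derive; [lra|]. field. lra.
  - intros t Ht. rewrite Rmin_left, Rmax_right in Ht by lra.
    apply (ex_derive_continuous (V:=R_NormedModule)). auto_derive. nra.
Qed.

Definition sup_at_infty (F : R -> R) (K : R) : Prop :=
  (forall y, F y <= K) /\ forall eps, 0 < eps -> exists Y, forall y, Y <= y -> K - eps < F y.

Lemma nondecreasing_bounded_sup (F : R -> R) (M : R) :
  (forall x y, x <= y -> F x <= F y) -> (forall y, F y <= M) ->
  exists K, sup_at_infty F K.
Proof.
  intros Hmono HM.
  destruct (completeness (fun z => exists y, z = F y)) as [K [Hub Hlub]].
  - exists M. intros z [y ->]. apply HM.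
  - exists (F 0), 0. reflexivity.
  - exists K. split; [intros y; apply Hub; exists y; reflexivity|].
    intros eps Heps.
    destruct (classic (exists Y, K - eps < F Y)) as [[Y HY]|Hnone].
    + exists Y. intros y Hy. pose proof (Hmono Y y Hy). lra.
    + assert (K <= K - eps); [|lra].
      apply Hlub. intros z [y ->]. apply Rnot_lt_le. intros Hy. apply Hnone. eauto.
Qed.

Lemma filter_forall_le {T : Type} (F : (T -> Prop) -> Prop) {FF : Filter F}
  (P : nat -> T -> Prop) (N : nat) :
  (forall l, F (P l)) -> F (fun x => forall l, (l <= N)%nat -> P l x).
Proof.
  intros HP. induction N as [|N IH].
  - eapply filter_imp; [|apply (HP 0%nat)].
    intros x Hx l Hl. replace l with 0%nat by lia. exact Hx.
  - eapply filter_imp; [|exact (filter_and _ _ IH (HP (S N)))].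
    intros x [Hle HSN] l Hl.
    destruct (Nat.eq_dec l (S N)) as [->|Hne]; [exact HSN|apply Hle; lia].
Qed.

Lemma is_RInt_gen_iff_RInt (f : R -> R) (Fa Fb : (R -> Prop) -> Prop)
  {FFa : Filter Fa} {FFb : Filter Fb} (l : R) :
  is_RInt_gen f Fa Fb l <->
  forall eps : posreal, filter_prod Fa Fb (fun ab =>
    ex_RInt f (fst ab) (snd ab) /\ Rabs (RInt f (fst ab) (snd ab) - l) < eps).
Proof.
  split.
  - intros Hf eps. eapply filter_imp; [|apply (Hf (ball l eps)), locally_ball].
    intros [a b] [y [Hy Hball]]. cbn [fst snd] in *. split; [exists y; exact Hy|].
    rewrite (is_RInt_unique _ _ _ _ Hy). exact Hball.
  - intros Happrox P [eps HP]. unfold filtermapi. eapply filter_imp; [|apply (Happrox eps)].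
    intros [a b] [Hex Hlt]. exists (RInt f a b).
    split; [apply (RInt_correct (V:=R_CompleteNormedModule)), Hex|apply HP, Hlt].
Qed.

Section TermwiseIntegration.

Variables (a : nat -> R) (h : nat -> R -> R) (I : nat -> R).

Hypothesis h_cont : forall l t, continuous (h l) t.
Hypothesis h_nonneg : forall l t, 0 <= h l t.
Hypothesis RInt_h_le : forall l x y, RInt (h l) x y <= I l.
Hypothesis h_integral :
  forall l, is_RInt_gen (h l) (Rbar_locally m_infty) (Rbar_locally p_infty) (I l).
Hypothesis abs_a_I_summable : ex_series (fun l => Rabs (a l) * I l).
Hypothesis locally_dominated : forall B, exists M : nat -> R,
  ex_series M /\ forall l t, Rabs t <= B -> Rabs (a l * h l t) <= M l.

Definition partial_sum (N : nat) (t : R) : R := sum_f_R0 (fun l => a l * h l t) N.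
Definition series_fun (t : R) : R := Series (fun l => a l * h l t).

Lemma I_nonneg l : 0 <= I l.
Proof. pose proof (RInt_h_le l 0 0) as H0. rewrite RInt_point in H0. exact H0. Qed.

Lemma continuous_partial_sum N t : continuous (partial_sum N) t.
Proof.
  induction N as [|N IH].
  - apply (continuous_mult (fun _ => a 0%nat) (h 0%nat)); [apply continuous_const|apply h_cont].
  - apply (continuous_plus (partial_sum N) (fun t => a (S N) * h (S N) t)); [exact IH|].
    apply (continuous_mult (fun _ => a (S N)) (h (S N))); [apply continuous_const|apply h_cont].
Qed.

Lemma is_RInt_partial_sum N x y :
  is_RInt (partial_sum N) x y (sum_f_R0 (fun l => a l * RInt (h l) x y) N).
Proof.
  assert (Hh : forall l, is_RInt (h l) x y (RInt (h l) x y)).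
  { intros l. apply (RInt_correct (V:=R_CompleteNormedModule)).
    apply (ex_RInt_continuous (V:=R_CompleteNormedModule)). intros; apply h_cont. }
  induction N as [|N IH].
  - exact (is_RInt_scal _ _ _ _ _ (Hh 0%nat)).
  - exact (is_RInt_plus _ _ _ _ _ _ IH (is_RInt_scal _ _ _ _ _ (Hh (S N)))).
Qed.

Lemma series_fun_sub_partial_le (M : nat -> R) B N t :
  ex_series M -> (forall l t, Rabs t <= B -> Rabs (a l * h l t) <= M l) ->
  Rabs t <= B -> Rabs (series_fun t - partial_sum N t) <= Series M - sum_f_R0 M N.
Proof. intros HM Hdom Ht. apply Series_tail_le; auto. Qed.

Lemma continuous_series_fun t0 : continuous series_fun t0.
Proof.
  destruct (locally_dominated (Rabs t0 + 1)) as [M [HM Hdom]].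
  apply continuity_pt_filterlim.
  apply (CVU_continuity partial_sum series_fun t0 (mkposreal 1 Rlt_0_1)).
  - intros eps Heps. destruct (Series_tail_lt M eps HM Heps) as [N0 HN0].
    exists N0. intros N y HN Hy. unfold Boule in Hy; simpl in Hy.
    eapply Rle_lt_trans; [apply (series_fun_sub_partial_le M (Rabs t0 + 1)); auto|].
    + pose proof (Rabs_triang_inv y t0). lra.
    + eapply Rle_lt_trans; [apply Rle_abs|apply HN0, HN].
  - intros N y _. apply continuity_pt_filterlim, continuous_partial_sum.
  - unfold Boule. rewrite Rminus_diag, Rabs_R0. simpl; lra.
Qed.

Lemma ex_RInt_series_fun x y : ex_RInt series_fun x y.
Proof.
  apply (ex_RInt_continuous (V:=R_CompleteNormedModule)).
  intros; apply continuous_series_fun.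
Qed.

Lemma Rabs_RInt_series_fun_sub_partial (M : nat -> R) x y N :
  x <= y -> ex_series M ->
  (forall l t, Rabs t <= Rmax (- x) y -> Rabs (a l * h l t) <= M l) ->
  Rabs (RInt series_fun x y - RInt (partial_sum N) x y)
    <= (y - x) * (Series M - sum_f_R0 M N).
Proof.
  intros Hxy HM Hdom.
  assert (Hpart : ex_RInt (partial_sum N) x y) by (eexists; apply is_RInt_partial_sum).
  rewrite <- (RInt_minus (V:=R_CompleteNormedModule)); auto using ex_RInt_series_fun.
  apply abs_RInt_le_const; auto.
  - apply (ex_RInt_minus (V:=R_NormedModule)); auto using ex_RInt_series_fun.
  - intros t Ht. apply (series_fun_sub_partial_le M (Rmax (- x) y)); auto.
    pose proof (Rmax_l (- x) y). pose proof (Rmax_r (- x) y).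
    unfold Rabs; destruct (Rcase_abs t); lra.
Qed.

Lemma Rabs_RInt_h_sub_I_le l x y : x <= y -> Rabs (RInt (h l) x y - I l) <= I l.
Proof.
  intros Hxy. pose proof (RInt_h_le l x y).
  assert (0 <= RInt (h l) x y).
  { apply RInt_ge_0; [exact Hxy| |intros; apply h_nonneg].
    apply (ex_RInt_continuous (V:=R_CompleteNormedModule)). intros; apply h_cont. }
  rewrite Rabs_left1; lra.
Qed.

Lemma Rabs_sum_RInt_sub_I_le x y N0 N rho : x <= y -> (N0 <= N)%nat ->
  (forall l, (l <= N0)%nat -> Rabs (a l) * Rabs (RInt (h l) x y - I l) <= rho) ->
  Rabs (sum_f_R0 (fun l => a l * (RInt (h l) x y - I l)) N)
    <= INR (S N0) * rho
       + (Series (fun l => Rabs (a l) * I l) - sum_f_R0 (fun l => Rabs (a l) * I l) N0).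
Proof.
  intros Hxy HN Hhead.
  eapply Rle_trans; [apply Rsum_abs|].
  eapply Rle_trans; [apply (sum_f_R0_split_le _ (fun l => Rabs (a l) * I l) N0 N HN)|].
  - intros l _. rewrite Rabs_mult.
    apply Rmult_le_compat_l; [apply Rabs_pos|apply Rabs_RInt_h_sub_I_le, Hxy].
  - apply Rplus_le_compat.
    + eapply Rle_trans; [apply (sum_Rle _ (fun _ => rho))|rewrite sum_cte; lra].
      intros l Hl. rewrite Rabs_mult. apply Hhead, Hl.
    + apply Rplus_le_compat_r, sum_f_R0_le_Series; [|exact abs_a_I_summable].
      intros l. apply Rmult_le_pos; [apply Rabs_pos|apply I_nonneg].
Qed.

Lemma Rabs_RInt_series_fun_sub_lt eps N0 x y : 0 < eps -> x < y ->
  (forall N, (N0 <= N)%nat -> Rabs (Series (fun l => Rabs (a l) * I l)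
                                    - sum_f_R0 (fun l => Rabs (a l) * I l) N) < eps / 5) ->
  (forall l, (l <= N0)%nat ->
     Rabs (a l) * Rabs (RInt (h l) x y - I l) <= eps / 5 / INR (S N0)) ->
  Rabs (RInt series_fun x y - Series (fun l => a l * I l)) < eps.
Proof.
  intros Heps Hxy HN0 Hhead.
  set (v := fun l => Rabs (a l) * I l). fold v in HN0.
  destruct (locally_dominated (Rmax (- x) y)) as [M [HM Hdom]].
  destruct (Series_tail_lt M (eps / 5 / (y - x)) HM) as [N1 HN1].
  { apply Rdiv_lt_0_compat; lra. }
  (* Cut the series at N = max N0 N1: on [x, y] the partial sum N is uniformly close to the
     series; the integrals of index <= N0 are close to I l by hypothesis, those of index > N0
     are controlled by the tail of sum |a l| I l, since 0 <= int_x^y h l <= I l; so is the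
     tail of sum a l I l itself. *)
  set (N := max N0 N1).
  assert (HA : Rabs (RInt series_fun x y - RInt (partial_sum N) x y) < eps / 5).
  { eapply Rle_lt_trans; [apply (Rabs_RInt_series_fun_sub_partial M); auto; lra|].
    specialize (HN1 N (Nat.le_max_r _ _)).
    pose proof (Rle_abs (Series M - sum_f_R0 M N)).
    apply Rlt_le_trans with ((y - x) * (eps / 5 / (y - x))); [apply Rmult_lt_compat_l; lra|].
    right. field. lra. }
  assert (HB : Rabs (RInt (partial_sum N) x y - sum_f_R0 (fun l => a l * I l) N)
               < 2 * (eps / 5)).
  { rewrite (is_RInt_unique _ _ _ _ (is_RInt_partial_sum N x y)), <- minus_sum.
    rewrite (sum_eq _ (fun l => a l * (RInt (h l) x y - I l))) by (intros; ring).
    eapply Rle_lt_trans;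
      [apply (Rabs_sum_RInt_sub_I_le x y N0 N _ ltac:(lra) (Nat.le_max_l _ _) Hhead)|].
    specialize (HN0 N0 (le_n _)). pose proof (Rle_abs (Series v - sum_f_R0 v N0)).
    replace (INR (S N0) * (eps / 5 / INR (S N0))) with (eps / 5)
      by (field; apply not_0_INR; lia).
    fold v. lra. }
  assert (HC : Rabs (sum_f_R0 (fun l => a l * I l) N - Series (fun l => a l * I l)) < eps / 5).
  { rewrite Rabs_minus_sym.
    eapply Rle_lt_trans; [apply (Series_tail_le _ v); [|exact abs_a_I_summable]|].
    - intros l. unfold v. rewrite Rabs_mult, (Rabs_pos_eq (I l)) by apply I_nonneg. lra.
    - specialize (HN0 N (Nat.le_max_l _ _)). pose proof (Rle_abs (Series v - sum_f_R0 v N)).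
      lra. }
  set (e1 := RInt series_fun x y - RInt (partial_sum N) x y) in HA.
  set (e2 := RInt (partial_sum N) x y - sum_f_R0 (fun l => a l * I l) N) in HB.
  set (e3 := sum_f_R0 (fun l => a l * I l) N - Series (fun l => a l * I l)) in HC.
  replace (RInt series_fun x y - Series (fun l => a l * I l)) with (e1 + e2 + e3)
    by (unfold e1, e2, e3; ring).
  pose proof (Rabs_triang (e1 + e2) e3). pose proof (Rabs_triang e1 e2). lra.
Qed.

Theorem is_RInt_gen_series :
  is_RInt_gen series_fun (Rbar_locally m_infty) (Rbar_locally p_infty)
    (Series (fun l => a l * I l)).
Proof.
  apply (is_RInt_gen_iff_RInt _ _ _ _). intros eps.
  assert (Heps : 0 < eps / 5) by (pose proof (cond_pos eps); lra).
  destruct (Series_tail_lt _ (eps / 5) abs_a_I_summable Heps) as [N0 HN0].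
  set (rho := eps / 5 / INR (S N0)).
  assert (Hrho : 0 < rho) by (apply Rdiv_lt_0_compat; [lra|apply lt_0_INR; lia]).
  assert (Hhead : filter_prod (Rbar_locally m_infty) (Rbar_locally p_infty) (fun ab =>
    forall l, (l <= N0)%nat -> Rabs (a l) * Rabs (RInt (h l) (fst ab) (snd ab) - I l) <= rho)).
  { apply (filter_forall_le _
      (fun l ab => Rabs (a l) * Rabs (RInt (h l) (fst ab) (snd ab) - I l) <= rho)).
    intros l. pose proof (Rabs_pos (a l)).
    assert (Hdelta : 0 < rho / (Rabs (a l) + 1)) by (apply Rdiv_lt_0_compat; lra).
    eapply filter_imp; [|exact (proj1 (is_RInt_gen_iff_RInt _ _ _ _) (h_integral l)
                                  (mkposreal _ Hdelta))].
    intros ab [_ Hlt]. simpl in Hlt.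
    apply Rle_trans with (Rabs (a l) * (rho / (Rabs (a l) + 1))); [apply Rmult_le_compat_l; lra|].
    apply (Rmult_le_reg_r (Rabs (a l) + 1)); [lra|].
    replace (Rabs (a l) * (rho / (Rabs (a l) + 1)) * (Rabs (a l) + 1))
      with (Rabs (a l) * rho) by (field; lra).
    nra. }
  assert (Hsign : filter_prod (Rbar_locally m_infty) (Rbar_locally p_infty)
    (fun ab => fst ab < 0 < snd ab)).
  { apply (Filter_prod _ _ _ (fun x => x < 0) (fun y => 0 < y)); [exists 0|exists 0|]; auto. }
  eapply filter_imp; [|exact (filter_and _ _ Hhead Hsign)].
  intros [x y] [Hhd [Hx Hy]]; cbn [fst snd] in *.
  split; [apply ex_RInt_series_fun|].
  apply (Rabs_RInt_series_fun_sub_lt eps N0); auto; [apply cond_pos|lra].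
Qed.

End TermwiseIntegration.

Definition weight (n : nat) (t : R) : R := exp (- (t ^ (2 * n)) / (2 * INR n)).
Definition moment_integrand (n l : nat) (t : R) : R := t ^ (2 * n * l) * weight n t.
Definition partial_moment (n l : nat) (y : R) : R := RInt (moment_integrand n l) 0 y.

Lemma weight_pos n t : 0 < weight n t.
Proof. apply exp_pos. Qed.

Lemma weight_even n t : weight n (- t) = weight n t.
Proof. unfold weight. rewrite pow_even_opp. reflexivity. Qed.

Lemma continuous_moment_integrand n l t : continuous (moment_integrand n l) t.
Proof.
  apply (ex_derive_continuous (V:=R_NormedModule)). unfold moment_integrand, weight.
  auto_derive. auto.
Qed.

Lemma ex_RInt_moment_integrand n l x y : ex_RInt (moment_integrand n l) x y.
Proof.
  apply (ex_RInt_continuous (V:=R_CompleteNormedModule)).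
  intros; apply continuous_moment_integrand.
Qed.

Lemma moment_integrand_even n l t : moment_integrand n l (- t) = moment_integrand n l t.
Proof.
  unfold moment_integrand. rewrite weight_even, <- Nat.mul_assoc, pow_even_opp.
  reflexivity.
Qed.

Lemma moment_integrand_nonneg n l t : 0 <= moment_integrand n l t.
Proof.
  unfold moment_integrand. rewrite <- Nat.mul_assoc.
  apply Rmult_le_pos; [apply pow_even_nonneg|left; apply weight_pos].
Qed.

Lemma RInt_moment_integrand_eq n l x y :
  RInt (moment_integrand n l) x y = partial_moment n l y - partial_moment n l x.
Proof.
  unfold partial_moment.
  assert (Hchasles : RInt (moment_integrand n l) 0 x + RInt (moment_integrand n l) x y
                     = RInt (moment_integrand n l) 0 y)
    by (apply (RInt_Chasles (V:=R_CompleteNormedModule)); apply ex_RInt_moment_integrand).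
  lra.
Qed.

Lemma partial_moment_mono n l x y : x <= y -> partial_moment n l x <= partial_moment n l y.
Proof.
  intros Hxy.
  assert (0 <= RInt (moment_integrand n l) x y); [|rewrite RInt_moment_integrand_eq in *; lra].
  apply RInt_ge_0; [exact Hxy|apply ex_RInt_moment_integrand|intros; apply moment_integrand_nonneg].
Qed.

Lemma partial_moment_0 n l : partial_moment n l 0 = 0.
Proof. apply (RInt_point (V:=R_CompleteNormedModule)). Qed.

Lemma partial_moment_opp n l y : partial_moment n l (- y) = - partial_moment n l y.
Proof.
  unfold partial_moment.
  pose proof (is_RInt_comp_opp (V:=R_NormedModule) (moment_integrand n l) 0 y _
    (RInt_correct (V:=R_CompleteNormedModule) _ _ _ (ex_RInt_moment_integrand n l (- 0) (- y))))
    as Hopp.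
  rewrite Ropp_0 in Hopp. rewrite <- (is_RInt_unique _ _ _ _ Hopp).
  rewrite (RInt_ext _ (fun t => opp (moment_integrand n l t)))
    by (intros; rewrite moment_integrand_even; reflexivity).
  apply (RInt_opp (V:=R_CompleteNormedModule)), ex_RInt_moment_integrand.
Qed.

Section Moments.

Variable n : nat.
Hypothesis hn : (1 <= n)%nat.

Lemma two_n_pos : 0 < 2 * INR n.
Proof. apply le_INR in hn. simpl in hn. lra. Qed.

Lemma weight_le_compat s t : Rabs s <= Rabs t -> weight n t <= weight n s.
Proof.
  intros Hst. unfold weight, Rdiv.
  apply exp_le_compat. rewrite <- !Ropp_mult_distr_l. apply Ropp_le_contravar.
  apply Rmult_le_compat_r; [left; apply Rinv_0_lt_compat, two_n_pos|].
  apply pow_even_le, Hst.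
Qed.

Lemma weight_le_1 t : weight n t <= 1.
Proof.
  replace 1 with (weight n 0) by (unfold weight; rewrite pow_i by lia;
    rewrite Ropp_0, Rdiv_0_l; apply exp_0).
  apply weight_le_compat. rewrite Rabs_R0. apply Rabs_pos.
Qed.

Lemma moment_integrand_le_pow l t B : Rabs t <= B -> moment_integrand n l t <= B ^ (2 * n * l).
Proof.
  intros HtB. unfold moment_integrand. rewrite <- !Nat.mul_assoc.
  assert (HB : Rabs t <= Rabs B) by (rewrite (Rabs_pos_eq B); pose proof (Rabs_pos t); lra).
  pose proof (pow_even_le t B (n * l) HB). pose proof (pow_even_nonneg t (n * l)).
  pose proof (weight_le_1 t). pose proof (weight_pos n t). nra.
Qed.

Lemma pow_mul_weight_le j t : 1 <= t ->
  t ^ j * weight n t <= INR (Factorial.fact j) * (2 * INR n) ^ j.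
Proof.
  (* With y = t^(2n)/(2n): t^j <= t^(2nj) = (2n)^j y^j and y^j <= j! e^y = j! / weight n t. *)
  intros Ht. pose proof two_n_pos as Hm.
  set (y := t ^ (2 * n) / (2 * INR n)).
  assert (Hy : 0 <= y) by (apply Rdiv_le_0_compat; [apply pow_even_nonneg|exact Hm]).
  assert (Hw : weight n t * exp y = 1).
  { unfold weight, y. rewrite <- exp_plus, <- exp_0. f_equal. field. lra. }
  assert (Htj : t ^ j <= y ^ j * (2 * INR n) ^ j).
  { rewrite <- Rpow_mult_distr.
    replace (y * (2 * INR n)) with (t ^ (2 * n)) by (unfold y; field; lra).
    rewrite <- pow_mult. apply Rle_pow; [exact Ht|].
    replace j with (1 * j)%nat at 1 by lia. apply Nat.mul_le_mono_r. lia. }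
  pose proof (pow_le_fact_mul_exp y j Hy). pose proof (weight_pos n t).
  pose proof (pow_le (2 * INR n) j (Rlt_le _ _ Hm)).
  apply Rle_trans with (INR (Factorial.fact j) * exp y * (2 * INR n) ^ j * weight n t).
  - apply Rmult_le_compat_r; [lra|]. eapply Rle_trans; [exact Htj|].
    apply Rmult_le_compat_r; lra.
  - right. replace (INR (Factorial.fact j) * exp y * (2 * INR n) ^ j * weight n t)
      with (INR (Factorial.fact j) * (2 * INR n) ^ j * (weight n t * exp y)) by ring.
    rewrite Hw. ring.
Qed.

Lemma moment_integrand_quadratic_decay l :
  exists D, forall t, 0 <= t -> moment_integrand n l t * (1 + t) ^ 2 <= D.
Proof.
  set (j := (2 * n * l + 2)%nat).
  set (C := INR (Factorial.fact j) * (2 * INR n) ^ j).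
  exists (4 * (1 + C)). intros t Ht.
  pose proof (moment_integrand_nonneg n l t) as Hnn.
  assert (HC : 0 <= C)
    by (apply Rmult_le_pos; [apply pos_INR|apply pow_le; pose proof two_n_pos; lra]).
  destruct (Rle_lt_dec t 1) as [Ht1|Ht1].
  - assert (moment_integrand n l t <= 1).
    { rewrite <- (pow1 (2 * n * l)). apply moment_integrand_le_pow. rewrite Rabs_pos_eq; lra. }
    nra.
  - assert (Hj : moment_integrand n l t * t ^ 2 <= C).
    { replace (moment_integrand n l t * t ^ 2) with (t ^ j * weight n t)
        by (unfold moment_integrand, j; rewrite pow_add; ring).
      apply pow_mul_weight_le. lra. }
    assert (Hsq : (1 + t) ^ 2 <= 4 * t ^ 2) by nra.
    apply Rle_trans with (moment_integrand n l t * (4 * t ^ 2)); [apply Rmult_le_compat_l|]; lra.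
Qed.

Lemma partial_moment_bounded l : exists D, forall y, partial_moment n l y <= D.
Proof.
  destruct (moment_integrand_quadratic_decay l) as [D HD].
  assert (HD0 : 0 <= D)
    by (pose proof (HD 0 (Rle_refl 0)); pose proof (moment_integrand_nonneg n l 0); nra).
  exists D. intros y.
  destruct (Rle_lt_dec 0 y) as [Hy|Hy].
  - assert (Hint : is_RInt (fun t => D * / (1 + t) ^ 2) 0 y (D * (1 - / (1 + y))))
      by exact (is_RInt_scal _ _ _ D _ (is_RInt_inv_succ_sq y Hy)).
    apply Rle_trans with (D * (1 - / (1 + y))).
    + unfold partial_moment. rewrite <- (is_RInt_unique _ _ _ _ Hint).
      apply RInt_le; [exact Hy|apply ex_RInt_moment_integrand|eexists; exact Hint|].
      intros t Ht.
      assert (0 < (1 + t) ^ 2) by (apply pow_lt; lra).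
      apply (Rmult_le_reg_r ((1 + t) ^ 2)); [lra|].
      rewrite Rmult_assoc, Rinv_l by lra. specialize (HD t ltac:(lra)). lra.
    + assert (0 < / (1 + y)) by (apply Rinv_0_lt_compat; lra). nra.
  - unfold partial_moment. rewrite <- opp_RInt_swap by apply ex_RInt_moment_integrand.
    assert (0 <= RInt (moment_integrand n l) y 0); [|change (opp ?u) with (- u); lra].
    apply RInt_ge_0; [lra|apply ex_RInt_moment_integrand|intros; apply moment_integrand_nonneg].
Qed.

Lemma partial_moment_le_id l y : 0 <= y <= 1 -> partial_moment n l y <= y.
Proof.
  intros Hy. unfold partial_moment.
  eapply Rle_trans; [apply Rle_abs|].
  replace y with ((y - 0) * 1) at 2 by ring.
  apply abs_RInt_le_const; [lra|apply ex_RInt_moment_integrand|].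
  intros t Ht. rewrite Rabs_pos_eq by apply moment_integrand_nonneg.
  rewrite <- (pow1 (2 * n * l)). apply moment_integrand_le_pow. rewrite Rabs_pos_eq; lra.
Qed.

End Moments.

Definition gamma_integrand (s u : R) : R := Rpower u (s - 1) * exp (- u).
Definition gamma_arg (n l : nat) : R := INR l + / (2 * INR n).
(* Half of the moment int_R t^(2nl) exp(-t^(2n)/(2n)) dt, in closed form through Gamma;
   see [half_moment_sup]. *)
Definition half_moment (n l : nat) : R :=
  Rpower (2 * INR n) (gamma_arg n l - 1) * Gamma (gamma_arg n l).
(* The inverse of t |-> t^(2n)/(2n) on (0, +oo). *)
Definition scaled_root (n : nat) (u : R) : R := Rpower (2 * INR n * u) (/ (2 * INR n)).

Lemma continuous_gamma_integrand s u : 0 < u -> continuous (gamma_integrand s) u.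
Proof.
  intros Hu. apply (ex_derive_continuous (V:=R_NormedModule)).
  unfold gamma_integrand, Rpower. auto_derive. exact Hu.
Qed.

Lemma ex_RInt_gamma_integrand s u1 u2 : 0 < u1 -> 0 < u2 -> ex_RInt (gamma_integrand s) u1 u2.
Proof.
  intros Hu1 Hu2. apply (ex_RInt_continuous (V:=R_CompleteNormedModule)).
  intros u Hu. apply continuous_gamma_integrand. pose proof (Rmin_glb_lt u1 u2 0). lra.
Qed.

Section HalfMoments.

Variable n : nat.
Hypothesis hn : (1 <= n)%nat.

Lemma gamma_integrand_subst l t : 0 < t ->
  t ^ pred (2 * n) * gamma_integrand (gamma_arg n l) (t ^ (2 * n) / (2 * INR n))
  = Rpower (2 * INR n) (1 - gamma_arg n l) * moment_integrand n l t.
Proof.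
  intros Ht. pose proof (two_n_pos n hn) as Hm.
  assert (Hpow : forall k, t ^ k = exp (INR k * ln t)).
  { intros k. rewrite <- (exp_ln (t ^ k)) by (apply pow_lt, Ht). rewrite ln_pow; auto. }
  assert (Hpred : INR (pred (2 * n)) = 2 * INR n - 1).
  { rewrite <- Nat.sub_1_r, minus_INR by lia. rewrite mult_INR. simpl. ring. }
  unfold gamma_integrand, moment_integrand, weight, gamma_arg, Rpower.
  replace (- (t ^ (2 * n) / (2 * INR n))) with (- t ^ (2 * n) / (2 * INR n)) by (field; lra).
  rewrite ln_div, ln_pow, !Hpow by (try apply pow_lt; auto).
  rewrite <- !Rmult_assoc, <- !exp_plus. f_equal. f_equal.
  rewrite Hpred, !mult_INR. simpl. field. lra.
Qed.

Lemma scaled_root_pos u : 0 < scaled_root n u.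
Proof. apply exp_pos. Qed.

Lemma scaled_root_pow u : 0 < u -> scaled_root n u ^ (2 * n) / (2 * INR n) = u.
Proof.
  intros Hu. pose proof (two_n_pos n hn) as Hm.
  unfold scaled_root. rewrite <- Rpower_pow by apply exp_pos.
  rewrite Rpower_mult, mult_INR. simpl (INR 2).
  replace (/ (2 * INR n) * ((1 + 1) * INR n)) with 1 by (field; lra).
  rewrite Rpower_1 by nra. field. lra.
Qed.

Lemma lt_of_scaled_pow_lt a b : 0 <= b ->
  a ^ (2 * n) / (2 * INR n) < b ^ (2 * n) / (2 * INR n) -> a < b.
Proof.
  intros Hb Hlt. apply Rnot_le_lt. intros Hba.
  assert (b ^ (2 * n) <= a ^ (2 * n)) by (apply pow_incr; lra).
  assert (b ^ (2 * n) / (2 * INR n) <= a ^ (2 * n) / (2 * INR n)); [|lra].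
  apply Rmult_le_compat_r; [left; apply Rinv_0_lt_compat, two_n_pos, hn|assumption].
Qed.

Lemma scaled_root_lt u d : 0 < u -> 0 <= d -> u < d ^ (2 * n) / (2 * INR n) -> scaled_root n u < d.
Proof.
  intros Hu Hd Hlt. apply lt_of_scaled_pow_lt; [exact Hd|].
  rewrite scaled_root_pow; assumption.
Qed.

Lemma lt_scaled_root u d : 0 < u -> d ^ (2 * n) / (2 * INR n) < u -> d < scaled_root n u.
Proof.
  intros Hu Hlt. apply lt_of_scaled_pow_lt; [left; apply scaled_root_pos|].
  rewrite scaled_root_pow; assumption.
Qed.

Lemma RInt_gamma_integrand_eq l u1 u2 : 0 < u1 -> 0 < u2 ->
  RInt (gamma_integrand (gamma_arg n l)) u1 u2 = Rpower (2 * INR n) (1 - gamma_arg n l)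
    * (partial_moment n l (scaled_root n u2) - partial_moment n l (scaled_root n u1)).
Proof.
  intros Hu1 Hu2. pose proof (two_n_pos n hn) as Hm.
  set (s := gamma_arg n l).
  set (x1 := scaled_root n u1). set (x2 := scaled_root n u2).
  assert (Hx : 0 < Rmin x1 x2) by (apply Rmin_glb_lt; apply scaled_root_pos).
  pose proof (is_RInt_comp (V:=R_CompleteNormedModule) (gamma_integrand s)
    (fun t => t ^ (2 * n) / (2 * INR n)) (fun t => t ^ pred (2 * n)) x1 x2) as Hsubst.
  unfold x1, x2 in Hsubst. rewrite !scaled_root_pow in Hsubst by assumption. fold x1 x2 in Hsubst.
  rewrite <- (RInt_moment_integrand_eq n l x1 x2).
  rewrite <- (RInt_scal (V:=R_CompleteNormedModule)) by apply ex_RInt_moment_integrand.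
  symmetry. apply is_RInt_unique.
  eapply is_RInt_ext; [|apply Hsubst].
  - intros t Ht. change (scal ?u ?v) with (u * v). apply gamma_integrand_subst. lra.
  - intros t Ht. apply continuous_gamma_integrand.
    apply Rdiv_lt_0_compat; [apply pow_lt; lra|exact Hm].
  - intros t Ht. split.
    + auto_derive; [exact I|].
      replace (n + (n + 0))%nat with (2 * n)%nat by lia. rewrite mult_INR. simpl (INR 2).
      field. lra.
    + apply (ex_derive_continuous (V:=R_NormedModule)). auto_derive. exact I.
Qed.

Lemma Rabs_RInt_gamma_integrand_sub_le l K eta u1 u2 :
  (forall y, partial_moment n l y <= K) -> 0 < u1 -> 0 < u2 ->
  scaled_root n u1 <= Rmin eta 1 -> K - eta < partial_moment n l (scaled_root n u2) ->
  Rabs (RInt (gamma_integrand (gamma_arg n l)) u1 u2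
        - Rpower (2 * INR n) (1 - gamma_arg n l) * K)
    <= Rpower (2 * INR n) (1 - gamma_arg n l) * (2 * eta).
Proof.
  intros HK Hu1 Hu2 Hx1 Hx2.
  set (C := Rpower (2 * INR n) (1 - gamma_arg n l)).
  assert (HC : 0 < C) by apply exp_pos.
  rewrite RInt_gamma_integrand_eq by assumption. fold C.
  set (x1 := scaled_root n u1) in *. set (x2 := scaled_root n u2) in *.
  pose proof (Rmin_l eta 1). pose proof (Rmin_r eta 1).
  assert (Hx1pos : 0 < x1) by apply scaled_root_pos.
  pose proof (partial_moment_le_id n hn l x1 ltac:(lra)).
  pose proof (partial_moment_mono n l 0 x1 ltac:(lra)) as Hmono.
  rewrite partial_moment_0 in Hmono. pose proof (HK x2).
  replace (C * (partial_moment n l x2 - partial_moment n l x1) - C * K)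
    with (C * (partial_moment n l x2 - partial_moment n l x1 - K)) by ring.
  rewrite Rabs_mult, (Rabs_pos_eq C) by lra.
  apply Rmult_le_compat_l; [lra|]. apply Rabs_le. lra.
Qed.

Lemma is_RInt_gen_gamma_integrand l K : sup_at_infty (partial_moment n l) K ->
  is_RInt_gen (gamma_integrand (gamma_arg n l)) (at_right 0) (Rbar_locally p_infty)
    (Rpower (2 * INR n) (1 - gamma_arg n l) * K).
Proof.
  intros [HK Happrox]. pose proof (two_n_pos n hn) as Hm.
  apply (is_RInt_gen_iff_RInt _ _ _ _). intros eps.
  set (C := Rpower (2 * INR n) (1 - gamma_arg n l)).
  assert (HC : 0 < C) by apply exp_pos.
  set (eta := eps / (4 * C)).
  assert (Heta : 0 < eta) by (apply Rdiv_lt_0_compat; [apply cond_pos|lra]).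
  set (d := Rmin eta 1).
  assert (Hd : 0 < d) by (apply Rmin_glb_lt; lra).
  destruct (Happrox eta Heta) as [Y HY].
  set (Y0 := Rmax Y 0).
  assert (Hd2 : 0 < d ^ (2 * n) / (2 * INR n)) by (apply Rdiv_lt_0_compat; [apply pow_lt|]; lra).
  assert (HY0 : 0 <= Y0 ^ (2 * n) / (2 * INR n))
    by (apply Rdiv_le_0_compat; [apply pow_le, Rmax_r|exact Hm]).
  apply (Filter_prod _ _ _ (fun u => 0 < u < d ^ (2 * n) / (2 * INR n))
                           (fun u => Y0 ^ (2 * n) / (2 * INR n) < u)).
  - exists (mkposreal _ Hd2). intros u Hu Hpos. simpl in Hu.
    change (Rabs (u - 0) < d ^ (2 * n) / (2 * INR n)) in Hu.
    rewrite Rminus_0_r, Rabs_pos_eq in Hu; lra.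
  - exists (Y0 ^ (2 * n) / (2 * INR n)). auto.
  - intros u1 u2 Hu1 Hu2. cbn [fst snd].
    split; [apply ex_RInt_gamma_integrand; lra|].
    eapply Rle_lt_trans; [apply (Rabs_RInt_gamma_integrand_sub_le l K eta); auto; try lra|].
    + fold d. left. apply scaled_root_lt; lra.
    + apply HY. apply Rle_trans with Y0; [apply Rmax_l|].
      left. apply lt_scaled_root; lra.
    + fold C. replace (C * (2 * eta)) with (eps / 2) by (unfold eta; field; lra).
      pose proof (cond_pos eps). lra.
Qed.

Lemma half_moment_sup l : sup_at_infty (partial_moment n l) (half_moment n l).
Proof.
  destruct (partial_moment_bounded n hn l) as [D HD].
  destruct (nondecreasing_bounded_sup (partial_moment n l) D (partial_moment_mono n l) HD)
    as [K HK].
  replace (half_moment n l) with K; [exact HK|].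
  unfold half_moment.
  change (Gamma (gamma_arg n l))
    with (RInt_gen (gamma_integrand (gamma_arg n l)) (at_right 0) (Rbar_locally p_infty)).
  rewrite (@is_RInt_gen_unique R_CompleteNormedModule _ _
    (Proper_StrongProper _ (at_right_proper_filter 0))
    (Proper_StrongProper _ (Rbar_locally_filter p_infty)) _ _
    (is_RInt_gen_gamma_integrand l K HK)).
  rewrite <- Rmult_assoc, <- Rpower_plus.
  replace (gamma_arg n l - 1 + (1 - gamma_arg n l)) with 0 by ring.
  rewrite Rpower_O by exact (two_n_pos n hn). ring.
Qed.

Lemma weight_2_le_half_moment l : weight n 2 <= half_moment n l.
Proof.
  destruct (half_moment_sup l) as [Hle _].
  apply Rle_trans with (partial_moment n l 2); [|apply Hle].
  pose proof (partial_moment_mono n l 0 1 Rle_0_1) as H01. rewrite partial_moment_0 in H01.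
  assert (H12 : weight n 2 <= RInt (moment_integrand n l) 1 2).
  { replace (weight n 2) with (RInt (fun _ => weight n 2) 1 2)
      by (rewrite RInt_const; unfold scal; simpl; unfold mult; simpl; ring).
    apply RInt_le; [lra|apply ex_RInt_const|apply ex_RInt_moment_integrand|].
    intros t Ht. unfold moment_integrand.
    assert (1 <= t ^ (2 * n * l)) by (apply pow_R1_Rle; lra).
    assert (weight n 2 <= weight n t)
      by (apply weight_le_compat; [exact hn|rewrite !Rabs_pos_eq; lra]).
    pose proof (weight_pos n 2). nra. }
  rewrite RInt_moment_integrand_eq in H12. lra.
Qed.

Lemma half_moment_pos l : 0 < half_moment n l.
Proof. pose proof (weight_2_le_half_moment l). pose proof (weight_pos n 2). lra. Qed.

Lemma RInt_moment_integrand_le l x y : RInt (moment_integrand n l) x y <= 2 * half_moment n l.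
Proof.
  destruct (half_moment_sup l) as [Hle _].
  rewrite RInt_moment_integrand_eq.
  pose proof (partial_moment_opp n l (- x)) as Hx. rewrite Ropp_involutive in Hx.
  pose proof (Hle y). pose proof (Hle (- x)). lra.
Qed.

Lemma is_RInt_gen_moment_integrand l : is_RInt_gen (moment_integrand n l)
  (Rbar_locally m_infty) (Rbar_locally p_infty) (2 * half_moment n l).
Proof.
  destruct (half_moment_sup l) as [Hle Happrox].
  apply (is_RInt_gen_iff_RInt _ _ _ _). intros eps.
  destruct (Happrox (eps / 2)) as [Y HY]; [pose proof (cond_pos eps); lra|].
  apply (Filter_prod _ _ _ (fun x => x < - Y) (fun y => Y < y)); [exists (- Y)|exists Y|]; auto.
  intros x y Hx Hy. cbn [fst snd]. split; [apply ex_RInt_moment_integrand|].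
  rewrite RInt_moment_integrand_eq.
  pose proof (partial_moment_opp n l (- x)) as Hopp. rewrite Ropp_involutive in Hopp.
  pose proof (HY y ltac:(lra)). pose proof (HY (- x) ltac:(lra)).
  pose proof (Hle y). pose proof (Hle (- x)).
  rewrite Rabs_left1; lra.
Qed.

Lemma coef_mul_two_half_moment l :
  coef n l * (2 * half_moment n l) = (-1) ^ l / ((2 * INR n) ^ l * INR (Factorial.fact l)).
Proof.
  pose proof (two_n_pos n hn) as Hm. pose proof (INR_fact_pos l) as Hfact.
  set (P := Rpower (2 * INR n) (gamma_arg n l - 1)).
  assert (HP : 0 < P) by apply exp_pos.
  assert (HGamma : Gamma (gamma_arg n l) <> 0).
  { intros H0. pose proof (half_moment_pos l) as Hpos.
    unfold half_moment in Hpos. fold P in Hpos. rewrite H0, Rmult_0_r in Hpos. lra. }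
  assert (Hexp : Rpower (2 * INR n) (2 * INR l + / (2 * INR n)) = P * (2 * INR n) ^ S l).
  { unfold P. rewrite <- Rpower_pow, <- Rpower_plus by exact Hm. f_equal.
    unfold gamma_arg. rewrite S_INR. ring. }
  unfold coef, half_moment. fold P. rewrite Hexp.
  change (INR l + / (2 * INR n)) with (gamma_arg n l). simpl.
  field. repeat split; try lra. apply pow_nonzero. lra.
Qed.

End HalfMoments.

Section Coefficients.

Variable n : nat.
Hypothesis hn : (1 <= n)%nat.
Variable omega : R.

Let x := omega ^ (2 * n) / (2 * INR n).

Lemma coef_term_mul_two_half_moment l :
  coef n l * omega ^ (2 * n * l) * (2 * half_moment n l) = (- x) ^ l / INR (Factorial.fact l).
Proof.
  pose proof (two_n_pos n hn) as Hm. pose proof (INR_fact_pos l) as Hfact.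
  replace (coef n l * omega ^ (2 * n * l) * (2 * half_moment n l))
    with (coef n l * (2 * half_moment n l) * omega ^ (2 * n * l)) by ring.
  rewrite coef_mul_two_half_moment by exact hn.
  unfold x. rewrite pow_mult. set (y := omega ^ (2 * n)).
  replace (- (y / (2 * INR n))) with ((-1) * y * / (2 * INR n)) by (field; lra).
  rewrite (Rpow_mult_distr ((-1) * y)), (Rpow_mult_distr (-1)), pow_inv.
  field. split; [apply pow_nonzero|]; lra.
Qed.

Lemma Rabs_coef_term_mul_two_half_moment l :
  Rabs (coef n l * omega ^ (2 * n * l)) * (2 * half_moment n l)
  = x ^ l / INR (Factorial.fact l).
Proof.
  pose proof (half_moment_pos n hn l).
  assert (Hx : 0 <= x) by (apply Rdiv_le_0_compat; [apply pow_even_nonneg|apply two_n_pos, hn]).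
  rewrite <- (Rabs_pos_eq (2 * half_moment n l)) by lra.
  rewrite <- Rabs_mult, coef_term_mul_two_half_moment.
  unfold Rdiv. rewrite Rabs_mult, Rabs_inv, <- RPow_abs, Rabs_Ropp, !Rabs_pos_eq;
    auto using pos_INR.
Qed.

Lemma Series_coef_term_mul_two_half_moment :
  Series (fun l => coef n l * omega ^ (2 * n * l) * (2 * half_moment n l)) = exp (- x).
Proof.
  rewrite (Series_ext _ _ coef_term_mul_two_half_moment).
  apply is_series_unique, is_series_exp.
Qed.

Lemma ex_series_Rabs_coef_term_mul_two_half_moment :
  ex_series (fun l => Rabs (coef n l * omega ^ (2 * n * l)) * (2 * half_moment n l)).
Proof.
  exists (exp x). eapply is_series_ext; [|apply is_series_exp].
  intros l. symmetry. apply Rabs_coef_term_mul_two_half_moment.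
Qed.

Lemma coef_term_moment_integrand_dominated (B : R) : exists M : nat -> R, ex_series M /\
  forall l t, Rabs t <= B -> Rabs (coef n l * omega ^ (2 * n * l) * moment_integrand n l t) <= M l.
Proof.
  pose proof (weight_pos n 2) as Hw2.
  exists (fun l => (x * B ^ (2 * n)) ^ l / INR (Factorial.fact l) / (2 * weight n 2)).
  split; [eexists; apply is_series_scal_r, is_series_exp|].
  intros l t Ht.
  assert (Hcoef : Rabs (coef n l * omega ^ (2 * n * l))
                  <= x ^ l / INR (Factorial.fact l) / (2 * weight n 2)).
  { pose proof (weight_2_le_half_moment n hn l). pose proof (INR_fact_pos l).
    apply (Rmult_le_reg_r (2 * weight n 2)); [lra|].
    replace (x ^ l / INR (Factorial.fact l) / (2 * weight n 2) * (2 * weight n 2))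
      with (x ^ l / INR (Factorial.fact l)) by (field; lra).
    rewrite <- Rabs_coef_term_mul_two_half_moment.
    apply Rmult_le_compat_l; [apply Rabs_pos|lra]. }
  rewrite Rabs_mult, (Rabs_pos_eq (moment_integrand n l t)) by apply moment_integrand_nonneg.
  eapply Rle_trans; [apply Rmult_le_compat; [apply Rabs_pos|apply moment_integrand_nonneg|
    exact Hcoef|apply moment_integrand_le_pow; eauto]|].
  right. rewrite Rpow_mult_distr, <- pow_mult. field. pose proof (INR_fact_pos l). lra.
Qed.

End Coefficients.

Theorem lemma1 (n : nat) (hn : (1 <= n)%nat) (omega : R) :
  is_RInt_gen
    (fun t => Series (fun l => coef n l * (omega * t) ^ (2 * n * l))
              * exp (- (t ^ (2 * n)) / (2 * INR n)))
    (Rbar_locally m_infty) (Rbar_locally p_infty)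
    (exp (- (omega ^ (2 * n)) / (2 * INR n))).
Proof.
  pose proof (is_RInt_gen_series (fun l => coef n l * omega ^ (2 * n * l)) (moment_integrand n)
    (fun l => 2 * half_moment n l)
    (continuous_moment_integrand n) (moment_integrand_nonneg n) (RInt_moment_integrand_le n hn)
    (is_RInt_gen_moment_integrand n hn)
    (ex_series_Rabs_coef_term_mul_two_half_moment n hn omega)
    (coef_term_moment_integrand_dominated n hn omega)) as Hint.
  cbv beta in Hint. rewrite Series_coef_term_mul_two_half_moment in Hint by exact hn.
  replace (- (omega ^ (2 * n)) / (2 * INR n)) with (- (omega ^ (2 * n) / (2 * INR n)))
    by (field; pose proof (two_n_pos n hn); lra).
  eapply is_RInt_gen_ext; [|exact Hint].
  apply filter_forall. intros ab t _. unfold series_fun, moment_integrand, weight.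
  rewrite <- Series_scal_r. apply Series_ext. intros l. rewrite Rpow_mult_distr. ring.
Qed.
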